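(* For every integer $t\geq 2$ we have $f_o(t)\leq f_{eo}(t)\leq 2f(t)$.
   Context: All graphs are loopless. $f(t)$ is the smallest integer such that every graph with no $K_t$-minor is properly $f(t)$-colorable. An odd-$K_t$-minor of a graph $G$ is a 2-coloring of the vertices of $G$ together with vertex-disjoint trees $T_1,\dots,T_t$ in $G$ such that (i) every edge of every $T_i$ is properly colored (endpoints of different colors) and (ii) between any two distinct trees $T_i,T_j$ there is a monochromatic edge. An even-odd-$K_t$-minor is defined the same way except that (ii) is replaced by: between any two distinct trees $T_i,T_j$ there is at least one monochromatic edge and at least one properly colored edge. $f_o(t)$ (resp. $f_{eo}(t)$) is the smallest integer such that every graph with no odd-$K_t$-minor (resp. no even-odd-$K_t$-minor) is properly $f_o(t)$-colorable (resp. $f_{eo}(t)$-colorable). *)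

From mathcomp Require Import all_boot.
Set Implicit Arguments. Unset Strict Implicit. Unset Printing Implicit Defensive.

Section Graphs.
Variable T : finType.
Variable e : rel T.

Definition is_tree (B : {set T}) (F : {set {set T}}) : Prop :=
  [/\ B != set0,
      (forall f, f \in F -> exists x y, [/\ f = [set x; y], x \in B, y \in B & e x y]),
      (forall x y, x \in B -> y \in B -> connect [rel u v | [set u; v] \in F] x y)
    & #|F| = (#|B| - 1)%N].

Definition colorable (k : nat) : Prop :=
  exists c : T -> 'I_k, forall x y, e x y -> c x != c y.

Definition has_K_minor (t : nat) : Prop :=
  exists (B : 'I_t -> {set T}) (F : 'I_t -> {set {set T}}),
    [/\ (forall i, is_tree (B i) (F i)),
        (forall i j, i != j -> [disjoint B i & B j])
      & (forall i j, i != j -> exists x y, [/\ x \in B i, y \in B j & e x y])].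

Definition has_odd_K_minor (t : nat) : Prop :=
  exists (c : T -> bool) (B : 'I_t -> {set T}) (F : 'I_t -> {set {set T}}),
    [/\ (forall i, is_tree (B i) (F i)),
        (forall i x y, [set x; y] \in F i -> c x != c y),
        (forall i j, i != j -> [disjoint B i & B j])
      & (forall i j, i != j ->
           exists x y, [/\ x \in B i, y \in B j, e x y & c x == c y])].

Definition has_even_odd_K_minor (t : nat) : Prop :=
  exists (c : T -> bool) (B : 'I_t -> {set T}) (F : 'I_t -> {set {set T}}),
    [/\ (forall i, is_tree (B i) (F i)),
        (forall i x y, [set x; y] \in F i -> c x != c y),
        (forall i j, i != j -> [disjoint B i & B j]),
        (forall i j, i != j ->
           exists x y, [/\ x \in B i, y \in B j, e x y & c x == c y])
      & (forall i j, i != j ->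
           exists x y, [/\ x \in B i, y \in B j, e x y & c x != c y])].
End Graphs.

Definition simple_graph (T : finType) (e : rel T) : Prop :=
  irreflexive e /\ symmetric e.

(* "k is an admissible value": every graph with no K_t-minor is k-colourable.
   f(t) is the least such k; similarly f_o, f_eo. *)
Definition minor_bound (t k : nat) : Prop :=
  forall (T : finType) (e : rel T), simple_graph e -> ~ has_K_minor e t -> colorable e k.
Definition odd_minor_bound (t k : nat) : Prop :=
  forall (T : finType) (e : rel T), simple_graph e -> ~ has_odd_K_minor e t -> colorable e k.
Definition even_odd_minor_bound (t k : nat) : Prop :=
  forall (T : finType) (e : rel T), simple_graph e -> ~ has_even_odd_K_minor e t -> colorable e k.

From mathcomp Require Import all_boot.
Set Implicit Arguments. Unset Strict Implicit. Unset Printing Implicit Defensive.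

(* An even-odd-K_t-minor is in particular an odd-K_t-minor.  For the second
   bound, take a partition of the vertices into connected parts, each properly
   2-coloured by b, such that any two adjacent parts are joined both by an edge
   on which b is constant and by an edge on which b changes.  Such a partition
   exists: otherwise two adjacent parts can be merged, after flipping b on one
   of them, which decreases the number of parts.  Because of the mixed edges, a
   K_t-minor of the quotient graph lifts, with the colouring b itself, to an
   even-odd-K_t-minor: its branch sets are spanned by trees of b-bichromatic
   edges.  Hence the quotient is f(t)-colourable, and pairing its colouring with
   b properly colours G with 2 f(t) colours. *)

Section Graphs.
Variable T : finType.

Definition induced (r : rel T) (Z : {set T}) : rel T :=
  [rel x y | [&& x \in Z, y \in Z & r x y]].

Definition connected_in (r : rel T) (Z : {set T}) : Prop :=
  {in Z &, forall x y, connect (induced r Z) x y}.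

Definition edge_rel (F : {set {set T}}) : rel T := [rel u v | [set u; v] \in F].

Lemma edge_rel_sym F : symmetric (edge_rel F).
Proof. by move=> u v; rewrite /edge_rel /= setUC. Qed.

Lemma set2_sym_rel (r : rel T) x y u v :
  symmetric r -> [set x; y] = [set u; v] -> r u v -> r x y.
Proof.
move=> rsym Exy ruv.
have /set2P[xu|xv] : x \in [set u; v] by rewrite -Exy set21.
all: have /set2P[yu|yv] : y \in [set u; v] by rewrite -Exy set22.
all: subst x y.
- by move: ruv; have /set2P[->|->] : v \in [set u; u] by rewrite Exy set22.
- by [].
- by rewrite rsym.
- by move: ruv; have /set2P[->|->] : u \in [set v; v] by rewrite Exy set21.
Qed.

Lemma connect_exit (r : rel T) (S : {set T}) x y :
  connect r x y -> x \in S -> y \notin S ->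
  exists x' y', [/\ x' \in S, y' \notin S & r x' y'].
Proof.
case/connectP=> s; elim: s x => [|z s IH] x /=; first by move=> _ -> ->.
case/andP=> rxz ps ly xS yS; case: (boolP (z \in S)) => zS.
  exact: IH ps ly zS yS.
by exists x, z.
Qed.

Lemma connect_induced (r : rel T) (Z : {set T}) x y :
  (forall u v, r u v -> u \in Z -> v \in Z) ->
  connect r x y -> x \in Z -> connect (induced r Z) x y.
Proof.
move=> rZ /connectP[s]; elim: s x => [|z s IH] x /=; first by move=> _ ->.
case/andP=> rxz ps ly xZ; have zZ := rZ _ _ rxz xZ.
by apply: connect_trans (connect1 _) (IH z ps ly zZ); rewrite /induced /= xZ zZ.
Qed.

Lemma colorable_card (S : finType) (e : rel T) (c : T -> S) :
  (forall x y, e x y -> c x != c y) -> colorable e #|S|.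
Proof.
move=> cP; exists (fun x => enum_rank (c x)) => x y /cP.
by rewrite (inj_eq enum_rank_inj).
Qed.

Section Trees.
Variable r : rel T.

Lemma tree_edge B F x y :
  symmetric r -> is_tree r B F -> [set x; y] \in F -> [/\ x \in B, y \in B & r x y].
Proof.
move=> rsym [_ Fedge _ _] /Fedge[u [v [Exy uB vB ruv]]].
have xuv : x \in [set u; v] by rewrite -Exy set21.
have yuv : y \in [set u; v] by rewrite -Exy set22.
split; last exact: set2_sym_rel Exy ruv.
- by case/set2P: xuv => ->.
- by case/set2P: yuv => ->.
Qed.

Lemma tree_sub (r' : rel T) B F : subrel r r' -> is_tree r B F -> is_tree r' B F.
Proof.
move=> rr' [B0 Fedge Fconn cardF]; split=> // f /Fedge[u [v [-> uB vB /rr' ruv]]].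
by exists u, v.
Qed.

Lemma tree1 x : is_tree r [set x] set0.
Proof.
split; first by apply/set0Pn; exists x; rewrite set11.
- by move=> f; rewrite inE.
- by move=> u v /set1P-> /set1P->; apply: connect0.
- by rewrite cards0 cards1.
Qed.

Lemma tree_extend S F x y :
  is_tree r S F -> x \in S -> y \notin S -> r x y ->
  is_tree r (y |: S) ([set x; y] |: F).
Proof.
move=> [S0 Fedge Fconn cardF] xS yS rxy.
split; first by apply/set0Pn; exists y; rewrite setU11.
- move=> f /setU1P[->|/Fedge[u [v [-> uS vS ruv]]]].
    by exists x, y; rewrite !in_setU1 eqxx xS orbT.
  by exists u, v; rewrite !in_setU1 uS vS !orbT.
- pose R := edge_rel ([set x; y] |: F).
  have old u v : u \in S -> v \in S -> connect R u v.
    move=> uS vS; apply: connect_sub (Fconn u v uS vS) => u' v' Fuv.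
    by apply: connect1; rewrite /R /edge_rel /= in_setU1 [_ \in F]Fuv orbT.
  have yx : connect R y x by apply: connect1; rewrite /R /edge_rel /= setUC setU11.
  have Rsym := sym_connect_sym (edge_rel_sym ([set x; y] |: F)).
  move=> u v /setU1P[->|uS] /setU1P[->|vS].
  + exact: connect0.
  + exact: connect_trans yx (old _ _ xS vS).
  + by rewrite Rsym; apply: connect_trans yx (old _ _ xS uS).
  + exact: old.
- have xyF : [set x; y] \notin F.
    apply: contra yS => /Fedge[u [v [Exy uS vS _]]].
    by have /set2P[->|->] : y \in [set u; v] by rewrite -Exy set22.
  have S_gt0 : 0 < #|S| by apply/card_gt0P; exists x.
  by rewrite !cardsU1 xyF yS cardF !add1n subn1 prednK // subSS subn0.
Qed.

Lemma connected_spanning_tree Z :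
  Z != set0 -> connected_in r Z -> exists F, is_tree r Z F.
Proof.
move=> Z0 Zconn.
suff grow n : n < #|Z| ->
    exists (S : {set T}) (F : {set {set T}}),
      [/\ S \subset Z, #|S| = n.+1 & is_tree r S F].
  have [|S [F [SZ cardS treeS]]] := grow #|Z|.-1; first by rewrite prednK ?card_gt0.
  suff -> : Z = S by exists F.
  by apply/esym/eqP; rewrite eqEcard SZ cardS prednK ?card_gt0 ?leqnn.
elim: n => [|n IH] ltnZ.
  have [z zZ] := set0Pn _ Z0.
  by exists [set z], set0; rewrite sub1set zZ cards1; split=> //; apply: tree1.
have [S [F [SZ cardS treeS]]] := IH (ltnW ltnZ).
have [y yZ yS] : exists2 y, y \in Z & y \notin S.
  apply/subsetPn; apply: contraTN ltnZ => /subset_leq_card.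
  by rewrite cardS ltnNge negbK.
have [x0 x0S] : exists x0, x0 \in S by apply/card_gt0P; rewrite cardS.
have [x [x' [xS x'S /and3P[_ x'Z rxx']]]] :=
  connect_exit (Zconn _ _ (subsetP SZ _ x0S) yZ) x0S yS.
exists (x' |: S), ([set x; x'] |: F); split.
- by rewrite subUset sub1set x'Z.
- by rewrite cardsU1 x'S cardS.
- exact: tree_extend.
Qed.

End Trees.
End Graphs.

Section Partitions.
Variables (T : finType) (e : rel T).
Hypothesis e_sym : symmetric e.

(* A partition of the vertices is encoded by a labelling p : T -> T: its parts
   are the fibres of p. *)
Definition part_rel (p : T -> T) : rel T := [rel x y | e x y && (p x == p y)].

Definition bipartite_parts (p : T -> T) (b : T -> bool) : Prop :=
  forall x y, e x y -> p x = p y -> b x != b y.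

Definition connected_parts (p : T -> T) : Prop :=
  forall x y, p x = p y -> connect (part_rel p) x y.

Definition part_link (p : T -> T) (b : T -> bool) (u v : T) (s : bool) : bool :=
  [exists x, exists y, [&& p x == u, p y == v, e x y & (b x != b y) == s]].

Definition mixed_parts (p : T -> T) (b : T -> bool) : bool :=
  [forall x, forall y, e x y && (p x != p y) ==>
     part_link p b (p x) (p y) true && part_link p b (p x) (p y) false].

Section Merge.
Variables (p : T -> T) (b : T -> bool) (x0 y0 : T) (s : bool).
Hypotheses (p_bip : bipartite_parts p b) (p_conn : connected_parts p).
Hypotheses (e_x0y0 : e x0 y0) (p_x0y0 : p x0 != p y0).
Hypothesis no_link : ~~ part_link p b (p x0) (p y0) s.

Definition merge_label z := if p z == p y0 then p x0 else p z.
(* Every edge between the two parts is bichromatic iff ~~ s, so flipping b by s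
   on the part of y0 makes all of them bichromatic. *)
Definition merge_side z := if p z == p y0 then b z (+) s else b z.

Lemma merge_bipartite : bipartite_parts merge_label merge_side.
Proof.
have link_free x y : p x = p x0 -> p y = p y0 -> e x y -> b x != b y (+) s.
  move=> px py exy; apply: contra no_link => bxy; apply/existsP; exists x.
  apply/existsP; exists y; rewrite px py exy !eqxx.
  by case: (b x) (b y) s bxy => [] [] [].
move=> x y exy; rewrite /merge_label /merge_side.
case: eqP => px; case: eqP => py.
- move=> _; have := p_bip exy (etrans px (esym py)).
  by case: (b x) (b y) s => [] [] [].
- move/esym=> py'; have := link_free y x py' px; rewrite e_sym => /(_ exy).
  by case: (b x) (b y) s => [] [] [].
- by move=> px'; apply: link_free.
- exact: p_bip.
Qed.

Lemma merge_connected : connected_parts merge_label.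
Proof.
have sub x y : connect (part_rel p) x y -> connect (part_rel merge_label) x y.
  apply: connect_sub => u v /andP[euv /eqP puv].
  by apply: connect1; rewrite /part_rel /= euv /merge_label puv eqxx.
have across x y : p x = p x0 -> p y = p y0 -> connect (part_rel merge_label) x y.
  move=> px py; apply: connect_trans (sub _ _ (p_conn px)) _.
  apply: connect_trans (sub _ _ (p_conn (esym py))).
  by apply: connect1; rewrite /part_rel /= e_x0y0 /merge_label (negbTE p_x0y0) !eqxx.
have msym : connect_sym (part_rel merge_label).
  by apply: sym_connect_sym => u v; rewrite /part_rel /= e_sym eq_sym.
move=> x y; rewrite /merge_label; case: eqP => px; case: eqP => py.
- by move=> _; apply/sub/p_conn; rewrite px py.
- by move=> pyx; rewrite msym; apply: across.
- by move=> pxy; apply: across.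
- by move=> pxy; apply/sub/p_conn.
Qed.

Lemma merge_fewer_labels : #|merge_label @: T| < #|p @: T|.
Proof.
have y0_label : p y0 \in p @: T by apply: imset_f.
apply: (@leq_ltn_trans #|(p @: T) :\ p y0|); last first.
  by rewrite [ltnRHS](cardsD1 (p y0)) y0_label.
apply/subset_leq_card/subsetP => _ /imsetP[z _ ->]; rewrite /merge_label.
by case: eqP => pz; rewrite !inE ?p_x0y0 ?imset_f ?andbT //; apply/eqP.
Qed.

End Merge.

Lemma unmixed_merge p b :
  bipartite_parts p b -> connected_parts p -> ~~ mixed_parts p b ->
  exists p' b', [/\ bipartite_parts p' b', connected_parts p' & #|p' @: T| < #|p @: T|].
Proof.
move=> p_bip p_conn /forallPn[x /forallPn[y]].
rewrite negb_imply negb_and => /andP[/andP[exy pxy] no_links].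
have [s no_link] : exists s, ~~ part_link p b (p x) (p y) s.
  by case/orP: no_links => ?; [exists true | exists false].
exists (merge_label p x y), (merge_side p b y s); split.
- exact: merge_bipartite.
- exact: merge_connected.
- exact: merge_fewer_labels.
Qed.

Hypothesis e_irr : irreflexive e.

Lemma exists_mixed_partition :
  exists p b, [/\ bipartite_parts p b, connected_parts p & mixed_parts p b].
Proof.
suff grow n p b : #|p @: T| < n -> bipartite_parts p b -> connected_parts p ->
    exists p b, [/\ bipartite_parts p b, connected_parts p & mixed_parts p b].
  apply: (grow _ id (fun=> false)) => [|x y exy /= xy|x y /= ->].
  - exact: ltnSn.
  - by rewrite xy e_irr in exy.
  - exact: connect0.
elim: n p b => [p b //|n IH p b lt_n p_bip p_conn].
have [mixed|/(unmixed_merge p_bip p_conn)[p' [b' [p'_bip p'_conn lt_p']]]] :=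
  boolP (mixed_parts p b); first by exists p, b.
by apply: IH p'_bip p'_conn; apply: leq_trans lt_p' _; rewrite -ltnS.
Qed.

Definition quotient (p : T -> T) : rel T :=
  [rel u v | (u != v) && [exists x, exists y, [&& p x == u, p y == v & e x y]]].

Lemma quotient_sym p : symmetric (quotient p).
Proof.
move=> u v; rewrite /quotient /= eq_sym; congr (_ && _).
by apply/existsP/existsP=> -[x /existsP[y /and3P[pxu pyv exy]]];
  exists y; apply/existsP; exists x; rewrite pxu pyv e_sym.
Qed.

Lemma quotient_irr p : irreflexive (quotient p).
Proof. by move=> u; rewrite /quotient /= eqxx. Qed.

Lemma colorable_quotient p b k :
  bipartite_parts p b -> colorable (quotient p) k -> colorable e (2 * k).
Proof.
move=> p_bip [phi phiP].
rewrite -[2]card_bool -[k in _ * k]card_ord -card_prod.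
apply: (@colorable_card _ _ _ (fun x => (b x, phi (p x)))) => x y exy.
have [pxy|pxy] := eqVneq (p x) (p y).
  by apply: contra (p_bip _ _ exy pxy) => /eqP[->].
apply: contra (phiP (p x) (p y) _) => [/eqP[_ ->] //|].
rewrite /quotient /= pxy; apply/existsP; exists x; apply/existsP; exists y.
by rewrite !eqxx exy.
Qed.

End Partitions.

Lemma even_odd_K_minor_odd (T : finType) (e : rel T) t :
  has_even_odd_K_minor e t -> has_odd_K_minor e t.
Proof. by case=> c [B [F [treeB colF disjB monoB _]]]; exists c, B, F. Qed.

Section Lift.
Variables (T : finType) (e : rel T) (p : T -> T) (b : T -> bool).
Hypothesis e_sym : symmetric e.
Hypotheses (p_bip : bipartite_parts e p b) (p_conn : connected_parts e p).
Hypothesis p_mixed : mixed_parts e p b.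

Definition bichromatic : rel T := [rel x y | e x y && (b x != b y)].

Lemma bichromatic_sym : symmetric bichromatic.
Proof. by move=> x y; rewrite /bichromatic /= e_sym eq_sym. Qed.

Lemma quotient_link u v s : quotient e p u v -> part_link e p b u v s.
Proof.
case/andP=> uv /existsP[x /existsP[y /and3P[/eqP pxu /eqP pyv exy]]].
move/forallP/(_ x)/forallP/(_ y): p_mixed.
by rewrite exy pxu pyv uv => /andP[]; case: s.
Qed.

Lemma part_connect_preim (B : {set T}) x y :
  p x = p y -> p x \in B -> connect (induced bichromatic (p @^-1: B)) x y.
Proof.
move=> pxy xB; pose Z := p @^-1: B.
have sub : subrel (induced (part_rel e p) Z) (connect (induced bichromatic Z)).
  move=> u v /and3P[uZ vZ /andP[euv /eqP puv]]; apply: connect1.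
  by rewrite /induced /bichromatic /= uZ vZ euv p_bip.
apply: connect_sub sub _ _ (connect_induced _ (p_conn pxy) _) => [u v|];
  by rewrite !inE // => /andP[_ /eqP ->].
Qed.

Lemma quotient_edge_preim (B : {set T}) F x a :
  is_tree (quotient e p) B F -> [set p x; a] \in F ->
  exists2 y, p y = a & connect (induced bichromatic (p @^-1: B)) x y.
Proof.
move=> treeB /(tree_edge (quotient_sym e_sym p) treeB)[xB aB /(quotient_link true)].
case/existsP=> x1 /existsP[y1 /and4P[/eqP px1 /eqP py1 exy1 /eqP bxy1]].
exists y1 => //; apply: connect_trans (part_connect_preim (esym px1) xB) (connect1 _).
by rewrite /induced /bichromatic /= !inE px1 py1 xB aB exy1 bxy1.
Qed.

Lemma preim_tree_connected (B : {set T}) F :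
  is_tree (quotient e p) B F -> connected_in bichromatic (p @^-1: B).
Proof.
move=> treeB x y; rewrite !inE => xB yB; have [_ _ Fconn _] := treeB.
case/connectP: (Fconn _ _ xB yB) => s; elim: s x xB => [|a s IH] x xB /=.
  by move=> _ pyx; apply: part_connect_preim.
case/andP=> Fxa ps ly; have [x1 px1 conn_xx1] := quotient_edge_preim treeB Fxa.
have x1B : p x1 \in B.
  by rewrite px1; case: (tree_edge (quotient_sym e_sym p) treeB Fxa).
by apply: connect_trans conn_xx1 (IH x1 x1B _ _); rewrite px1.
Qed.

Lemma lift_K_minor t :
  1 < t -> has_K_minor (quotient e p) t -> has_even_odd_K_minor e t.
Proof.
move=> t_gt1 [B [F [treeB disjB adjB]]]; pose Z i := p @^-1: B i.
have links i j s : i != j ->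
    exists x y, [/\ x \in Z i, y \in Z j, e x y & (b x != b y) = s].
  case/adjB=> u [v [uB vB /(quotient_link s)/existsP[x /existsP[y]]]].
  case/and4P=> /eqP pxu /eqP pyv exy /eqP bxy.
  by exists x, y; rewrite !inE pxu pyv.
(* A branch set may contain labels outside the range of p; it meets the range
   since, as t > 1, it is adjacent to another branch set. *)
have Z_neq0 i : Z i != set0.
  have [j] : exists j, j \in [set~ i].
    by apply/card_gt0P; rewrite cardsC1 card_ord -ltnS prednK // ltnW.
  rewrite in_setC1 eq_sym => /(links _ _ true)[x [_ [xZ _ _ _]]].
  by apply/set0Pn; exists x.
have /fin_all_exists[FZ treeZ] i : exists F', is_tree bichromatic (Z i) F'.
  exact: connected_spanning_tree (Z_neq0 i) (preim_tree_connected (treeB i)).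
exists b, Z, FZ; split.
- by move=> i; apply: tree_sub (treeZ i) => x y /andP[].
- by move=> i x y /(tree_edge bichromatic_sym (treeZ i))[_ _ /andP[]].
- move=> i j /disjB; rewrite -!setI_eq0 -preimsetI => /eqP->.
  by rewrite preimset0.
- move=> i j /(links _ _ false)[x [y [xZ yZ exy /negbFE bxy]]].
  by exists x, y.
- by move=> i j /(links _ _ true)[x [y [xZ yZ exy bxy]]]; exists x, y; rewrite bxy.
Qed.

End Lift.

Theorem theorem3p7 (t : nat) : (2 <= t)%N ->
  (forall k, even_odd_minor_bound t k -> odd_minor_bound t k) /\
  (forall k, minor_bound t k -> even_odd_minor_bound t (2 * k)).
Proof.
move=> t_ge2; split=> k bound T e e_simple no_minor.
  exact: bound e_simple (contra_not (@even_odd_K_minor_odd T e t) no_minor).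
have [e_irr e_sym] := e_simple.
have [p [b [p_bip p_conn p_mixed]]] := exists_mixed_partition e_sym e_irr.
apply: (colorable_quotient p_bip); apply: bound.
  by split; [exact: quotient_irr | exact: quotient_sym].
exact: contra_not (lift_K_minor e_sym p_bip p_conn p_mixed t_ge2) no_minor.
Qed.
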